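(* Let $q=2^m$ with $m\ge 3$. Consider the map $\tau$ sending a pair of integers $(q_1,q_2)$ with $q_1,q_2,q_1+q_2,q_1-q_2$ all $\not\equiv0\pmod q$ to $\tau(q_1,q_2)=\big(\psi(q_1,q_2),\alpha^{(1)}(q_1,q_2),\dots,\alpha^{(m-1)}(q_1,q_2)\big)$. Then $\tau$ takes at most $(m-1)^2$ distinct values.
   Context: Let $\gamma=e^{2\pi i/q}$. Let $A$ be the set of odd residues in $\{1,\dots,q-1\}$, and for $1\le j\le m-1$ let $B_j=\{x\in\{1,\dots,q-1\}: 2^j\mid x,\ 2^{j+1}\nmid x\}$. Define $\psi(q_1,q_2)(z)=\sum_{l\in A}\prod_{i=1}^{2}(z-\gamma^{q_il})(z-\gamma^{-q_il})$ and $\alpha^{(j)}(q_1,q_2)(z)=\sum_{l\in B_j}\prod_{i=1}^{2}(z-\gamma^{q_il})(z-\gamma^{-q_il})$. *)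

From HB Require Import structures.
From mathcomp Require Import all_boot all_order all_algebra all_field.
Set Implicit Arguments. Unset Strict Implicit. Unset Printing Implicit Defensive.
Import Order.TTheory GRing.Theory Num.Theory.
Local Open Scope ring_scope.

Definition qq (m : nat) : nat := (2 ^ m)%N.

(* gamma = e^{2 pi i / q}: the (q/2)-th root of -1 with minimal nonnegative
   argument, i.e. e^{i pi / 2^(m-1)} = e^{2 pi i / 2^m}. *)
Definition gam (m : nat) : algC := (2 ^ m.-1)%N.-root (-1).

Definition fac (m : nat) (q1 q2 : int) (l : nat) : {poly algC} :=
  \prod_(qi <- [:: q1; q2])
     (('X - ((gam m) ^ (qi * l%:Z))%:P) * ('X - ((gam m) ^ (- (qi * l%:Z)))%:P)).

Definition psi (m : nat) (q1 q2 : int) : {poly algC} :=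
  \sum_(l < qq m | (0 < l)%N && odd l) fac m q1 q2 l.

Definition alpha (m j : nat) (q1 q2 : int) : {poly algC} :=
  \sum_(l < qq m | [&& (0 < l)%N, (2 ^ j %| l)%N & ~~ (2 ^ j.+1 %| l)%N])
     fac m q1 q2 l.

Definition tau (m : nat) (q1 q2 : int) : seq {poly algC} :=
  psi m q1 q2 :: [seq alpha m j q1 q2 | j <- iota 1 m.-1].

Definition admissible (m : nat) (q1 q2 : int) : Prop :=
  let q := (qq m)%:Z in
  [/\ ~~ (q %| q1)%Z, ~~ (q %| q2)%Z, ~~ (q %| q1 + q2)%Z & ~~ (q %| q1 - q2)%Z].

From HB Require Import structures.
From mathcomp Require Import all_boot all_order all_algebra all_field.
From mathcomp Require Import ring zify.
Import Order.TTheory GRing.Theory Num.Theory.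
Local Open Scope ring_scope.

(* Let g = gam m, a primitive q-th root of unity (q = 2^m), and for an index set S
   put C_S(n) = sum_(l in S) (g^(n l) + g^(-n l)).  Each summand of psi and of the
   alpha^(j) expands as
     fac l = (X^2+1)^2 + (c(q1+q2) + c(q1-q2)) X^2 - (c(q1) + c(q2)) X (X^2+1),
   with c(n) = g^(n l) + g^(-n l); so a sum of fac over S only depends on
   C_S(q1) + C_S(q2) and C_S(q1+q2) + C_S(q1-q2).  The index sets A = B_0 and B_j
   are stable under the permutation l |-> u l (mod q) for odd u, hence
   C_S(u n) = C_S(n): C_S(n) only sees the power of 2 dividing |n|.
   A 2-adic case analysis then shows that the data of an admissible pair are those
   of one of the (m-1)^2 pairs rep i j = (2^i, 2^(j+1)) (i <= j) or
   (2^j, 2^j + 2^(i+1)) (j < i), i, j < m-1, so tau takes at most (m-1)^2 values. *)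

Section SymmetricPairs.
Variables (R : comUnitRingType) (g : R).
Hypothesis g_unit : g \is a GRing.unit.

(* cs n = g^n + g^-n, the analogue of 2 cos(n theta) *)
Definition cs (n : int) : R := g ^ n + g ^ (- n).

Lemma cs_opp (n : int) : cs (- n) = cs n.
Proof. by rewrite /cs opprK addrC. Qed.

Lemma cs_mul (a b : int) : cs a * cs b = cs (a + b) + cs (a - b).
Proof.
rewrite /cs mulrDl !mulrDr -!exprzDr // opprD opprB (addrC b).
by rewrite [g ^ (- a + b) + _]addrC addrACA.
Qed.

Lemma quadratic_pair (n : int) :
  ('X - (g ^ n)%:P) * ('X - (g ^ (- n))%:P) = 'X^2 + 1 - (cs n)%:P * 'X.
Proof.
have inv : g ^ n * g ^ (- n) = 1 by rewrite -exprzDr // subrr.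
transitivity ('X^2 + (g ^ n)%:P * (g ^ (- n))%:P
              - ((g ^ n)%:P + (g ^ (- n))%:P) * 'X); first by ring.
by rewrite -polyCM inv polyCD.
Qed.

(* product of two such factors, written in the basis used by sum_fac *)
Lemma quartic_pair (a b : int) :
  ('X - (g ^ a)%:P) * ('X - (g ^ (- a))%:P)
  * (('X - (g ^ b)%:P) * ('X - (g ^ (- b))%:P))
  = ('X^2 + 1) ^+ 2 + (cs (a + b) + cs (a - b))%:P * 'X^2
    - (cs a + cs b)%:P * ('X * ('X^2 + 1)).
Proof.
rewrite !quadratic_pair -cs_mul; move: (cs a) (cs b) => A B.
by rewrite polyCM polyCD; ring.
Qed.

End SymmetricPairs.
Arguments cs {R}.

Section RootOfUnity.
Variable m : nat.
Local Notation g := (gam m).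
Local Notation q := (qq m).

Lemma qq_gt0 : (0 < q)%N.
Proof. by rewrite expn_gt0. Qed.

Lemma gam_half : g ^+ (2 ^ m.-1) = -1.
Proof. by rewrite /gam rootCK // expn_gt0. Qed.

Lemma gam_unit : g \is a GRing.unit.
Proof.
rewrite unitfE; apply: contraTneq isT => g0.
have := gam_half; rewrite g0 expr0n expn_eq0 /=.
by move/eqP; rewrite eq_sym oppr_eq0 oner_eq0.
Qed.

Hypothesis m_gt0 : (0 < m)%N.

Lemma gam_qq : g ^+ q = 1.
Proof. by rewrite /qq -(prednK m_gt0) expnSr exprM gam_half sqrrN expr1n. Qed.

Lemma gam_expz_mod {x y : int} : ((q : int) %| x - y)%Z -> g ^ x = g ^ y.
Proof.
move=> /dvdzP [k hk]; rewrite -(subrK y x) hk exprzDr ?gam_unit //.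
by rewrite (mulrC k) -exprz_exp -exprnP gam_qq exp1rz mul1r.
Qed.

Lemma cs_gam_mod (x y : int) : ((q : int) %| x - y)%Z -> cs g x = cs g y.
Proof.
move=> dxy; rewrite /cs (gam_expz_mod dxy) (gam_expz_mod (x := - x) (y := - y)) //.
by rewrite -opprD rpredN.
Qed.

End RootOfUnity.

Lemma fac_expand (m : nat) (q1 q2 : int) (l : nat) :
  fac m q1 q2 l = ('X^2 + 1) ^+ 2
    + (cs (gam m) ((q1 + q2) * l%:Z) + cs (gam m) ((q1 - q2) * l%:Z))%:P * 'X^2
    - (cs (gam m) (q1 * l%:Z) + cs (gam m) (q2 * l%:Z))%:P * ('X * ('X^2 + 1)).
Proof.
by rewrite /fac !big_cons big_nil mulr1 quartic_pair ?gam_unit // mulrDl mulrBl.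
Qed.

Lemma coprime_exp2_odd (k u : nat) : odd u -> coprime (2 ^ k) u.
Proof. by move=> ou; rewrite coprimeXl // coprime_sym coprimen2. Qed.

Section OddDilation.
Variable m : nat.
Local Notation q := (qq m).

Definition dilate (u : nat) (l : 'I_q) : 'I_q :=
  Ordinal (ltn_pmod (u * l) (qq_gt0 m)).

Lemma dilate_inj (u : nat) : odd u -> injective (dilate u).
Proof.
move=> ou; suff le_inj (l1 l2 : 'I_q) : (l2 <= l1)%N -> dilate u l1 = dilate u l2 -> l1 = l2.
  move=> l1 l2 e; case: (leqP l2 l1) => [le21 | /ltnW le12]; first exact: le_inj.
  by apply/esym/le_inj.
move=> le21 /(congr1 val) /= /eqP; rewrite eqn_mod_dvd ?leq_mul2l ?le21 ?orbT //.
rewrite -mulnBr Gauss_dvdr ?coprime_exp2_odd // => dv.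
apply/val_inj/eqP; rewrite eqn_leq le21 andbT -subn_eq0.
have lt_q : (l1 - l2 < q)%N by apply: leq_ltn_trans (leq_subr _ _) (ltn_ord l1).
case: (posnP (l1 - l2)) => [// | pos].
by have := dvdn_leq pos dv; rewrite leqNgt lt_q.
Qed.

Lemma dilate_congr (u : nat) (n : int) (l : nat) :
  ((q : int) %| u%:Z * n * l%:Z - n * ((u * l) %% q)%N%:Z)%Z.
Proof.
rewrite (mulrC u%:Z n) -mulrA -PoszM -mulrBr; apply: dvdz_mull.
by rewrite {1}(divn_eq (u * l) q) PoszD addrK PoszM dvdz_mull.
Qed.

Definition dilation_stable (S : pred nat) :=
  forall u l, odd u -> (l < q)%N -> S ((u * l) %% q)%N = S l.

Lemma sum_dilate (V : nmodType) (S : pred nat) (f : int -> V) (u : nat) (n : int) :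
  dilation_stable S -> odd u ->
  (forall x y : int, ((q : int) %| x - y)%Z -> f x = f y) ->
  \sum_(l < q | S l) f (u%:Z * n * l%:Z) = \sum_(l < q | S l) f (n * l%:Z).
Proof.
move=> Sst ou fper; rewrite [RHS](reindex_inj (@dilate_inj u ou)) /=.
apply: eq_big => [l | l _]; first by rewrite /= Sst.
exact/fper/dilate_congr.
Qed.

End OddDilation.

Section ClassSums.
Variable m : nat.
Hypothesis m_gt0 : (0 < m)%N.
Local Notation q := (qq m).

Definition Cs (S : pred nat) (n : int) : algC := \sum_(l < q | S l) cs (gam m) (n * l%:Z).

Lemma sum_fac (S : pred nat) (q1 q2 : int) :
  \sum_(l < q | S l) fac m q1 q2 l =
  \sum_(l < q | S l) ('X^2 + 1) ^+ 2 + (Cs S (q1 + q2) + Cs S (q1 - q2))%:P * 'X^2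
  - (Cs S q1 + Cs S q2)%:P * ('X * ('X^2 + 1)).
Proof.
under eq_bigr do rewrite fac_expand.
rewrite big_split /= sumrN big_split /= -!mulr_suml -!rmorph_sum.
by rewrite /Cs -!big_split.
Qed.

Lemma Cs_opp (S : pred nat) (n : int) : Cs S (- n) = Cs S n.
Proof. by apply: eq_bigr => l _; rewrite mulNr cs_opp. Qed.

Lemma Cs_abs (S : pred nat) (n : int) : Cs S n = Cs S (absz n).
Proof. by case: n => n //; rewrite NegzE Cs_opp. Qed.

Lemma Cs_dilate (S : pred nat) (u : nat) (n : int) :
  dilation_stable m S -> odd u -> Cs S (u%:Z * n) = Cs S n.
Proof. by move=> Sst ou; apply: sum_dilate => // x y; apply: cs_gam_mod. Qed.

Lemma Cs_two_part (S : pred nat) (a w : nat) :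
  dilation_stable m S -> odd w -> Cs S (2 ^ a * w)%N = Cs S (2 ^ a)%N.
Proof. by move=> Sst ow; rewrite mulnC PoszM Cs_dilate. Qed.

End ClassSums.

Definition Bset (j : nat) : pred nat :=
  fun l => [&& (0 < l)%N, (2 ^ j %| l)%N & ~~ (2 ^ j.+1 %| l)%N].

Section IndexSets.
Variable m : nat.
Local Notation q := (qq m).

Lemma dvdn_dilate (k u l : nat) : (k <= m)%N -> odd u ->
  (2 ^ k %| (u * l) %% q)%N = (2 ^ k %| l)%N.
Proof.
move=> km ou; rewrite -(Gauss_dvdr l (coprime_exp2_odd k _ ou)).
by rewrite /dvdn /qq modn_dvdm // dvdn_exp2l.
Qed.

Lemma Bset_stable (j : nat) : (j < m)%N -> dilation_stable m (Bset j).
Proof.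
move=> jm u l ou _.
have pos_of (n : nat) : ~~ (2 ^ j.+1 %| n)%N -> (0 < n)%N.
  by rewrite lt0n; apply: contraNneq => ->; rewrite dvdn0.
rewrite /Bset !dvdn_dilate ?(ltnW jm) //.
case: (boolP (2 ^ j.+1 %| l)%N) => [_ | ndvd]; rewrite ?andbF //.
by rewrite !pos_of ?dvdn_dilate.
Qed.

End IndexSets.

Lemma psi_Bset0 (m : nat) (q1 q2 : int) :
  psi m q1 q2 = \sum_(l < qq m | Bset 0 l) fac m q1 q2 l.
Proof. by apply: eq_bigl => l; rewrite /Bset expn0 dvd1n expn1 dvdn2 negbK. Qed.

Lemma tau_determined (m : nat) (q1 q2 p1 p2 : int) : (0 < m)%N ->
  (forall j, (j < m)%N ->
     Cs m (Bset j) q1 + Cs m (Bset j) q2 = Cs m (Bset j) p1 + Cs m (Bset j) p2 /\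
     Cs m (Bset j) (q1 + q2) + Cs m (Bset j) (q1 - q2) =
       Cs m (Bset j) (p1 + p2) + Cs m (Bset j) (p1 - p2)) ->
  tau m q1 q2 = tau m p1 p2.
Proof.
move=> m_gt0 sameC.
have sumB j : (j < m)%N -> \sum_(l < qq m | Bset j l) fac m q1 q2 l
                           = \sum_(l < qq m | Bset j l) fac m p1 p2 l.
  by move=> jm; rewrite !sum_fac; case: (sameC j jm) => -> ->.
rewrite /tau !psi_Bset0 sumB //; congr (_ :: _).
by apply/eq_in_map => j; rewrite mem_iota add1n prednK // => /andP[_ /sumB].
Qed.

Lemma distnM (d x y : nat) : (`|d * x - d * y| = d * `|x - y|)%N.
Proof. by rewrite !PoszM -mulrBr abszM. Qed.

Lemma odd_distn (x y : nat) : odd `|x - y|%N = odd x (+) odd y.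
Proof.
case: (leqP y x) => [le_yx | /ltnW le_xy]; first by rewrite distnEl // oddB.
by rewrite distnEr // oddB // addbC.
Qed.

Lemma two_part (n : nat) : (0 < n)%N -> exists a w, odd w /\ n = (2 ^ a * w)%N.
Proof.
move=> n_gt0; have [w cw ->] := pfactor_coprime (isT : prime 2) n_gt0.
by exists (logn 2 n), w; rewrite mulnC -coprimen2 coprime_sym.
Qed.

Lemma two_part_lt (k a w : nat) : ~~ (2 ^ k %| 2 ^ a * w)%N -> (a < k)%N.
Proof. by apply: contraR; rewrite -leqNgt => ka; apply/dvdn_mulr/dvdn_exp2l. Qed.

Lemma double_even_part (n : nat) : (0 < n)%N -> ~~ odd n ->
  exists k o, [/\ (1 < k)%N, odd o & (2 * n = 2 ^ k * o)%N].
Proof.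
move=> n_gt0 n_even; have [[|a] [o [oo def_n]]] := two_part _ n_gt0.
  by move: n_even; rewrite def_n mul1n oo.
by exists a.+2, o; rewrite def_n mulnA -expnS.
Qed.

Lemma odd_sum_dist (w1 w2 : nat) : odd w1 -> odd w2 -> w1 != w2 ->
  exists k o1 o2, [/\ (1 < k)%N, odd o1, odd o2 &
    ((w1 + w2 = 2 * o1 /\ `|w1 - w2| = 2 ^ k * o2)
     \/ (w1 + w2 = 2 ^ k * o2 /\ `|w1 - w2| = 2 * o1))%N].
Proof.
move=> ow1 ow2 w12; set x := w1./2; set y := w2./2.
have half w : odd w -> w = (2 * w./2).+1.
  by move=> ow; rewrite -{1}(odd_double_half w) ow -muln2 mulnC.
have sum_eq : (w1 + w2 = 2 * (x + y).+1)%N.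
  by rewrite (half w1) // (half w2) // addSn addnS mulnS mulnDr add2n.
have dist_eq : (`|w1 - w2| = 2 * `|x - y|)%N.
  by rewrite (half w1) // (half w2) // -[(2 * x).+1]addn1 -[(2 * y).+1]addn1 distnDr distnM.
have dist_gt0 : (0 < `|x - y|)%N.
  rewrite lt0n distn_eq0; apply: contraNneq w12 => xy.
  by rewrite (half w1) // (half w2) // -/x -/y xy.
have parity : odd (x + y).+1 = ~~ odd `|x - y|%N by rewrite /= odd_distn oddD.
case: (boolP (odd (x + y).+1)) => [odd_s | even_s].
  have even_d : ~~ odd `|x - y|%N by rewrite -parity.
  have [k [o [k_gt1 oo ek]]] := double_even_part _ dist_gt0 even_d.
  by exists k, (x + y).+1, o; split=> //; left; rewrite sum_eq dist_eq ek.
have [k [o [k_gt1 oo ek]]] := double_even_part _ (ltn0Sn _) even_s.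
exists k, `|x - y|%N, o; split=> //; first by rewrite -[odd _]negbK -parity.
by right; rewrite sum_eq dist_eq ek.
Qed.

Definition two_part_invariant {V : nmodType} (c : nat -> V) :=
  forall a w, odd w -> c (2 ^ a * w)%N = c (2 ^ a)%N.

Section TwoAdicData.
Variables (V : nmodType) (c : nat -> V).
Hypothesis c_inv : two_part_invariant c.

(* (N1, N2) and (M1, M2) carry the same c-data on the pair and on
   its sum and difference, as sum_fac requires *)
Definition same_data (N1 N2 M1 M2 : nat) :=
  c N1 + c N2 = c M1 + c M2 /\
  c (N1 + N2)%N + c `|N1 - N2|%N = c (M1 + M2)%N + c `|M1 - M2|%N.

Lemma same_data_swap (N1 N2 M1 M2 : nat) :
  same_data N1 N2 M1 M2 -> same_data N2 N1 M1 M2.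
Proof. by case=> h1 h2; split; [rewrite addrC | rewrite addnC distnC]. Qed.

Lemma c_two_part_mul (a k o : nat) :
  odd o -> c (2 ^ a * (2 ^ k * o))%N = c (2 ^ (a + k))%N.
Proof. by move=> oo; rewrite mulnA -expnD c_inv. Qed.

(* distinct 2-adic valuations a < b: all four sum/difference data are c(2^a) *)
Lemma same_data_distinct (a b w1 w2 : nat) : (a < b)%N -> odd w1 -> odd w2 ->
  same_data (2 ^ a * w1) (2 ^ b * w2) (2 ^ a) (2 ^ b).
Proof.
move=> ab ow1 ow2; split; first by rewrite !c_inv.
rewrite -(subnKC (ltnW ab)) expnD; set e := (2 ^ (b - a))%N.
have even_e : odd e = false by rewrite oddX subn_eq0 leqNgt ab.
have rhs_sum : (2 ^ a + 2 ^ a * e = 2 ^ a * (1 + e))%N by rewrite mulnDr muln1.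
have rhs_dist : (`|2 ^ a - 2 ^ a * e| = 2 ^ a * `|1 - e|)%N by rewrite -distnM muln1.
rewrite -mulnA -mulnDr rhs_sum rhs_dist !distnM.
by rewrite !c_inv // ?odd_distn ?oddD ?oddM ?even_e ?ow1 ?ow2.
Qed.

(* equal valuations a: the sum and difference have valuations a + 1 and a + k *)
Lemma same_data_equal (a k w1 w2 o1 o2 : nat) :
  (1 < k)%N -> odd o1 -> odd o2 -> odd w1 -> odd w2 ->
  ((w1 + w2 = 2 * o1 /\ `|w1 - w2| = 2 ^ k * o2)
   \/ (w1 + w2 = 2 ^ k * o2 /\ `|w1 - w2| = 2 * o1))%N ->
  same_data (2 ^ a * w1) (2 ^ a * w2) (2 ^ a) (2 ^ a + 2 ^ (a + k)).
Proof.
case: k => [|j] // j_gt0 oo1 oo2 ow1 ow2 sum_dist.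
have even_2k i : (0 < i)%N -> odd (2 ^ i) = false.
  by move=> i_gt0; rewrite oddX orbF eqn0Ngt i_gt0.
have M_sum : (2 ^ a + (2 ^ a + 2 ^ (a + j.+1)) = 2 ^ a * (2 ^ 1 * (1 + 2 ^ j)))%N.
  by rewrite expnD expnS; ring.
have M_dist : (`|2 ^ a - (2 ^ a + 2 ^ (a + j.+1))| = 2 ^ a * (2 ^ j.+1 * 1))%N.
  by rewrite muln1 -expnD -{1}[(2 ^ a)%N]addn0 distnDl distnC distn0.
have M_pair : (2 ^ a + 2 ^ (a + j.+1) = 2 ^ a * (1 + 2 ^ j.+1))%N.
  by rewrite mulnDr muln1 expnD.
split; first by rewrite M_pair !c_inv // oddD even_2k.
rewrite M_sum M_dist !c_two_part_mul ?oddD ?even_2k // -!mulnDr distnM.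
have two_o1 : (2 * o1 = 2 ^ 1 * o1)%N by rewrite expn1.
by case: sum_dist => [[-> ->] | [-> ->]]; rewrite two_o1 !c_two_part_mul // addrC.
Qed.

End TwoAdicData.
Arguments same_data {V}.

Definition rep (i j : nat) : nat * nat :=
  if (i <= j)%N then (2 ^ i, 2 ^ j.+1)%N else (2 ^ j, 2 ^ j + 2 ^ i.+1)%N.

Lemma rep_distinct (m a b : nat) : (a < b)%N -> (b < m)%N ->
  exists i j, [/\ (i < m.-1)%N, (j < m.-1)%N & rep i j = (2 ^ a, 2 ^ b)%N].
Proof.
move=> ab bm; exists a, b.-1.
have le_ab : (a <= b.-1)%N by lia.
by rewrite /rep le_ab prednK; [split=> //; lia | lia].
Qed.

Lemma rep_equal (m a k : nat) : (1 < k)%N -> (a + k < m)%N ->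
  exists i j, [/\ (i < m.-1)%N, (j < m.-1)%N
                 & rep i j = (2 ^ a, 2 ^ a + 2 ^ (a + k))%N].
Proof.
move=> k_gt1 akm; exists (a + k).-1, a.
have gt_ak : ((a + k).-1 <= a)%N = false by apply/negbTE; rewrite -ltnNge; lia.
by rewrite /rep gt_ak prednK; [split=> //; lia | lia].
Qed.

Lemma representative (m N1 N2 : nat) :
  ~~ (2 ^ m %| N1)%N -> ~~ (2 ^ m %| N2)%N -> ~~ (2 ^ m %| N1 + N2)%N ->
  ~~ (2 ^ m %| `|N1 - N2|)%N ->
  exists i j, [/\ (i < m.-1)%N, (j < m.-1)%N &
    forall (V : nmodType) (c : nat -> V), two_part_invariant c ->
      same_data c N1 N2 (rep i j).1 (rep i j).2].
Proof.
move=> d1 d2 dS dD.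
have pos_of n : ~~ (2 ^ m %| n)%N -> (0 < n)%N.
  by rewrite lt0n; apply: contraNneq => ->; rewrite dvdn0.
have [a [w1 [ow1 def_N1]]] := two_part _ (pos_of _ d1).
have [b [w2 [ow2 def_N2]]] := two_part _ (pos_of _ d2).
have am : (a < m)%N by apply: (@two_part_lt _ _ w1); rewrite -def_N1.
have bm : (b < m)%N by apply: (@two_part_lt _ _ w2); rewrite -def_N2.
rewrite def_N1 def_N2 in dS dD *.
case: (ltngtP a b) => [ab | ba | eq_ab].
- have [i [j [im jm rep_ij]]] := rep_distinct _ _ _ ab bm.
  by exists i, j; rewrite rep_ij; split=> // V c c_inv; apply: same_data_distinct.
- have [i [j [im jm rep_ij]]] := rep_distinct _ _ _ ba am.
  by exists i, j; rewrite rep_ij; split=> // V c c_inv; apply/same_data_swap/same_data_distinct.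
subst b.
have w12 : w1 != w2 by apply: contraNneq dD => ->; rewrite distnn dvdn0.
have [k [o1 [o2 [k_gt1 oo1 oo2 sum_dist]]]] := odd_sum_dist _ _ ow1 ow2 w12.
have akm : (a + k < m)%N.
  apply: (@two_part_lt _ _ o2); rewrite expnD -mulnA.
  by case: (sum_dist) => [[_ <-] | [<- _]]; rewrite ?mulnDr -?distnM.
have [i [j [im jm rep_ij]]] := rep_equal _ _ _ k_gt1 akm.
by exists i, j; rewrite rep_ij; split=> // V c c_inv; apply: same_data_equal sum_dist.
Qed.

Lemma abs_sum_diff (q1 q2 : int) :
  (absz (q1 + q2) = (absz q1 + absz q2)%N /\ absz (q1 - q2) = `|absz q1 - absz q2|%N)
  \/ (absz (q1 + q2) = `|absz q1 - absz q2|%N /\ absz (q1 - q2) = (absz q1 + absz q2)%N).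
Proof.
case: q1 => a; case: q2 => b; rewrite ?NegzE ?abszN ?absz_nat.
- by left.
- by right.
- right; split; last by rewrite -opprD abszN -PoszD absz_nat.
  by rewrite [in RHS]distnC [in LHS]addrC.
left; split; first by rewrite -opprD abszN -PoszD absz_nat.
by rewrite opprK [in RHS]distnC [in LHS]addrC.
Qed.

Lemma admissible_abs (m : nat) (q1 q2 : int) : admissible m q1 q2 ->
  [/\ ~~ (2 ^ m %| absz q1)%N, ~~ (2 ^ m %| absz q2)%N,
      ~~ (2 ^ m %| absz q1 + absz q2)%N & ~~ (2 ^ m %| `|absz q1 - absz q2|)%N].
Proof.
case=> d1 d2 dS dD; rewrite !dvdzE /qq absz_nat in d1 d2 dS dD.
by case: (abs_sum_diff q1 q2) => [[eS eD] | [eS eD]]; rewrite eS eD in dS dD.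
Qed.

Lemma tau_from_data (m : nat) (q1 q2 : int) (M1 M2 : nat) : (0 < m)%N ->
  (forall (V : nmodType) (c : nat -> V), two_part_invariant c ->
     same_data c (absz q1) (absz q2) M1 M2) ->
  tau m q1 q2 = tau m M1 M2.
Proof.
move=> m_gt0 data; apply: tau_determined => // j jm.
have c_inv : two_part_invariant (fun N : nat => Cs m (Bset j) N).
  by move=> a w ow; apply: Cs_two_part => //; apply: Bset_stable.
have [pair_eq sd_eq] := data _ _ c_inv.
rewrite -PoszD (Cs_abs _ _ (M1%:Z - M2%:Z)) [Cs _ _ q1]Cs_abs [Cs _ _ q2]Cs_abs.
rewrite [Cs _ _ (q1 + q2)]Cs_abs [Cs _ _ (q1 - q2)]Cs_abs; split=> //.
case: (abs_sum_diff q1 q2) => [[-> ->] | [-> ->]]; first exact: sd_eq.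
by rewrite [LHS]addrC; exact: sd_eq.
Qed.

Theorem proposition3p1p4 (m : nat) (hm : (3 <= m)%N) :
  exists vals : seq (seq {poly algC}),
    (size vals <= (m.-1) ^ 2)%N /\
    (forall q1 q2 : int, admissible m q1 q2 -> tau m q1 q2 \in vals).
Proof.
have m_gt0 : (0 < m)%N by apply: leq_trans hm.
pose tau_rep i j := tau m (rep i j).1 (rep i j).2.
exists [seq tau_rep i j | i <- iota 0 m.-1, j <- iota 0 m.-1].
split; first by rewrite size_allpairs size_iota mulnn.
move=> q1 q2 /admissible_abs [d1 d2 dS dD].
have [i [j [im jm data]]] := representative _ _ _ d1 d2 dS dD.
rewrite (tau_from_data _ _ _ _ _ m_gt0 data).
by apply: (allpairs_f tau_rep); rewrite mem_iota.
Qed.
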